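(* Let $G$ be a 2-arc-colored directed multigraph. If $C$ is a minimal PC Euler subgraph of $G$, then for every vertex $v\in V(C)$, $d^+_{1,C}(v)\le 1$ and $d^+_{2,C}(v)\le 1$.
   Context: $G$ has an arbitrary arc coloring $\phi:A(G)\to\{1,2\}$. Trails are directed walks without repeated arcs; a closed trail is properly colored (PC) if every two consecutive arcs, including the last and first arcs, have different colors. A (multi)digraph is PC Euler if it has a PC closed trail containing all of its arcs. A PC Euler subgraph of $G$ is a subgraph (with at least one arc) that is PC Euler; it is minimal if no proper subgraph of it is PC Euler. $d^+_{i,C}(v)$ is the number of arcs of color $i$ in $C$ leaving $v$. *)

From mathcomp Require Import all_boot.
Set Implicit Arguments. Unset Strict Implicit. Unset Printing Implicit Defensive.

(* A finite directed multigraph G: vertex type V, arc type A (both finite),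
   each arc a goes from [tl a] to [hd a] (loops and parallel arcs allowed).
   A 2-arc-coloring is [col : A -> 'I_2] (color 1 <-> ord 0, color 2 <-> ord 1). *)

Section PC.
Variables (V A : finType) (tl hd : A -> V) (col : A -> 'I_2).

Definition pc_step (a b : A) : bool := (hd a == tl b) && (col a != col b).

Definition pc_closed_trail (s : seq A) : bool :=
  [&& s != [::], uniq s & cycle pc_step s].

Definition pc_euler (S : {set A}) : Prop :=
  exists s : seq A, pc_closed_trail s /\ [set a in s] = S.

Definition minimal_pc_euler (S : {set A}) : Prop :=
  pc_euler S /\ forall S' : {set A}, S' \proper S -> ~ pc_euler S'.

Definition outdeg_col (S : {set A}) (i : 'I_2) (v : V) : nat :=
  #|[set a in S | (tl a == v) && (col a == i)]|.

End PC.

From mathcomp Require Import all_boot.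

Set Implicit Arguments.
Unset Strict Implicit.

(* If two arcs a and b of a PC closed trail leave the same vertex with the same
   color, rotate the trail to start at a and cut it just before b: the arc
   preceding b ends at tl b = tl a and has a color different from col b = col a,
   so the part from a up to b closes up into a shorter PC closed trail, which
   misses b and contradicts minimality. *)

Section MinimalPCEuler.
Variables (V A : finType) (tl hd : A -> V) (col : A -> 'I_2).

Local Notation pc_trail := (pc_closed_trail tl hd col).

Lemma pc_closed_trail_rot n s : pc_trail (rot n s) = pc_trail s.
Proof. by rewrite /pc_closed_trail rot_uniq rot_cycle -!size_eq0 size_rot. Qed.

Lemma pc_closed_trail_shortcut a b t1 t2 :
  pc_trail (a :: t1 ++ b :: t2) -> tl a = tl b -> col a = col b ->
  pc_trail (a :: t1).
Proof.
rewrite /pc_closed_trail -cat_cons cat_uniq => /and3P[_ /and3P[uniq_at1 _ _]].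
rewrite [cycle _ _]/= rcons_cat cat_path => /andP[path_t1 /andP[step_b _]] tl_ab col_ab.
have step_a : pc_step tl hd col (last a t1) a by rewrite /pc_step tl_ab col_ab.
by rewrite uniq_at1 /= rcons_path path_t1 step_a.
Qed.

Lemma minimal_pc_euler_out_inj (C : {set A}) :
  minimal_pc_euler tl hd col C ->
  {in C &, forall a b, tl a = tl b -> col a = col b -> a = b}.
Proof.
move=> [[s [pc_s def_C]] min_C] a b aC bC tl_ab col_ab.
have [// | neq_ab] := eqVneq a b; exfalso.
have memC x : (x \in C) = (x \in s) by rewrite -def_C inE.
have [i s' rot_s] : rot_to_spec s a by apply: rot_to; rewrite -memC.
have pc_as' : pc_trail (a :: s') by rewrite -rot_s pc_closed_trail_rot.
have b_s' : b \in s'.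
  by move: bC; rewrite memC -(mem_rot i) rot_s inE eq_sym (negPf neq_ab).
case/splitPr: b_s' rot_s pc_as' => t1 t2 rot_s pc_as'.
apply: (min_C [set x in a :: t1]); last first.
  by exists (a :: t1); split; first exact: pc_closed_trail_shortcut pc_as' tl_ab col_ab.
apply/properP; split.
  apply/subsetP=> x; rewrite inE => x_at1.
  by rewrite memC -(mem_rot i) rot_s -cat_cons mem_cat x_at1.
exists b => //; rewrite inE.
move: pc_as' => /and3P[_ + _]; rewrite -cat_cons cat_uniq => /and3P[_ + _].
by apply: contra => b_at1; apply/hasP; exists b; rewrite ?inE ?eqxx.
Qed.

Lemma outdeg_col_le1 (S : {set A}) i v :
  {in S &, forall a b, tl a = tl b -> col a = col b -> a = b} ->
  outdeg_col tl col S i v <= 1.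
Proof.
move=> out_inj; apply/card_le1_eqP=> a b.
rewrite !inE => /andP[aS /andP[/eqP tl_a /eqP col_a]] /andP[bS /andP[/eqP tl_b /eqP col_b]].
by apply: out_inj; rewrite // ?tl_a ?tl_b ?col_a ?col_b.
Qed.

End MinimalPCEuler.

Theorem lemma2 (V A : finType) (tl hd : A -> V) (col : A -> 'I_2)
    (C : {set A}) :
  minimal_pc_euler tl hd col C ->
  forall v : V,
    outdeg_col tl col C ord0 v <= 1 /\ outdeg_col tl col C (@Ordinal 2 1 isT) v <= 1.
Proof.
move=> min_C v; have out_inj := minimal_pc_euler_out_inj min_C.
by split; apply: outdeg_col_le1.
Qed.
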